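(* Let $R,r>0$ and let $K^{-1/2}_0$ and $\{\mathbb{E}(t)\}_{t\in[-1/2,1/2]}$ be as in the context (touching disks). Then $\{\mathbb{E}(t)\}$ is a resolution of the identity on $K^{-1/2}_0$; namely, $$\langle f,g\rangle_{-1/2}=\int_{-1/2}^{1/2}d\langle f,\mathbb{E}(t)g\rangle_{-1/2}\quad\text{for all } f,g\in K^{-1/2}_0.$$ Moreover, $\lim_{t\to s}\mathbb{E}(t)=\mathbb{E}(s)$ for all $s\in[-1/2,1/2]$ (strongly).
   Context: Identify $\mathbb{R}^2$ with $\mathbb{C}$; for $a\in\mathbb{R}\setminus\{0\}$ let $B_a$ be the open disk of radius $|a|$ centered at $(a,0)$. Fix $R,r>0$, $\Omega=B_R\cup B_{-r}$, $q_1=\frac1{2r}+\frac1{2R}$. For $k\neq0$ let $\mathbb{S}(k)=\frac{1}{2|k|}\mathrm{diag}(1-e^{-|k|q_1},\,1+e^{-|k|q_1})$. $K^{-1/2}_0$ is the Hilbert space of pairs $\hat\varphi=(\hat\varphi_1,\hat\varphi_2)^T$ of measurable complex functions on $\mathbb{R}$ (mod a.e.) with $\int_{\mathbb{R}}\hat\varphi^T\mathbb{S}\overline{\hat\varphi}\,dk<\infty$, inner product $\langle\psi,\varphi\rangle_{-1/2}=\int_{\mathbb{R}}\hat\psi^T\mathbb{S}\overline{\hat\varphi}\,dk$ (in the paper such a pair represents a boundary density on $\partial\Omega$ after pulling back by $z\mapsto1/z$, Fourier transforming and applying $P=\frac1{\sqrt2}\begin{bmatrix}-1&1\\1&1\end{bmatrix}$).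 For $s\in\mathbb{R}\cup\{\infty\}$ let $\mathcal{P}^1(s)(\hat\varphi_1,\hat\varphi_2)=(\chi_{(-\infty,s]}\hat\varphi_1,0)$, $\mathcal{P}^2(s)(\hat\varphi_1,\hat\varphi_2)=(0,\chi_{(-\infty,s]}\hat\varphi_2)$ (with $\chi_{(-\infty,\infty]}\equiv1$), $\mathbb{I}=\mathcal{P}^1(\infty)+\mathcal{P}^2(\infty)$, and $$\mathbb{E}(t)=\begin{cases}\mathcal{P}^2\!\left(-\frac{\ln(-2t)}{q_1}\right)-\mathcal{P}^2\!\left(\frac{\ln(-2t)}{q_1}\right),& t\in[-1/2,0),\\[2pt]\mathcal{P}^1\!\left(\frac{\ln(2t)}{q_1}\right)-\mathcal{P}^1\!\left(-\frac{\ln(2t)}{q_1}\right)+\mathbb{I},& t\in(0,1/2],\end{cases}\qquad \mathbb{E}(0)=\lim_{t\to0^+}\mathbb{E}(t).$$ A resolution of the identity means: each $\mathbb{E}(t)$ is an orthogonal projection, $\mathbb{E}(t)\mathbb{E}(s)=\mathbb{E}(\min(t,s))$, $\mathbb{E}$ is right-continuous, $\mathbb{E}(-1/2)=0$, $\mathbb{E}(1/2)=\mathbb{I}$. *)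

From HB Require Import structures.
From mathcomp Require Import all_boot all_order all_algebra.
From mathcomp Require Import all_classical all_reals all_analysis.
From mathcomp Require Import complex.
Set Implicit Arguments. Unset Strict Implicit. Unset Printing Implicit Defensive.
Import Order.TTheory GRing.Theory Num.Theory.
Import numFieldNormedType.Exports.
Local Open Scope classical_set_scope.
Local Open Scope ring_scope.
Local Open Scope complex_scope.

Section TouchingDisks.
Variable R : realType.

(* A candidate element of K^{-1/2}_0: a pair (phi_1, phi_2) of complex
   functions on the real line (representative of an a.e.-class). *)
Definition elt := ((R -> R[i]) * (R -> R[i]))%type.

Definition ezero : elt := (fun _ => 0, fun _ => 0).
Definition eadd (f g : elt) : elt := (fun k => f.1 k + g.1 k, fun k => f.2 k + g.2 k).
Definition eopp (f : elt) : elt := (fun k => - f.1 k, fun k => - f.2 k).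
Definition esub (f g : elt) : elt := eadd f (eopp g).
Definition escale (a : R[i]) (f : elt) : elt := (fun k => a * f.1 k, fun k => a * f.2 k).

Definition q1 (Rad r : R) : R := 1 / (2 * r) + 1 / (2 * Rad).

(* diagonal entries of S(k) = 1/(2|k|) diag(1 - e^{-|k| q1}, 1 + e^{-|k| q1})
   (the value at k = 0, a null set, is irrelevant) *)
Definition S11 (q : R) (k : R) : R := (1 - expR (- (`|k| * q))) / (2 * `|k|).
Definition S22 (q : R) (k : R) : R := (1 + expR (- (`|k| * q))) / (2 * `|k|).

Definition sqmod (z : R[i]) : R := complex.Re z ^+ 2 + complex.Im z ^+ 2.

Definition Sform (q : R) (f : elt) (k : R) : R :=
  S11 q k * sqmod (f.1 k) + S22 q k * sqmod (f.2 k).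

Notation leb := (@lebesgue_measure R).

Definition inK (q : R) (f : elt) : Prop :=
  [/\ measurable_fun setT (fun k => complex.Re (f.1 k)),
      measurable_fun setT (fun k => complex.Im (f.1 k)),
      measurable_fun setT (fun k => complex.Re (f.2 k)),
      measurable_fun setT (fun k => complex.Im (f.2 k)) &
      (\int[leb]_(k in setT) (Sform q f k)%:E < +oo)%E].

Definition eqK (f g : elt) : Prop :=
  {ae leb, forall k, f.1 k = g.1 k /\ f.2 k = g.2 k}.

Definition ipw (q : R) (psi phi : elt) (k : R) : R[i] :=
  (S11 q k)%:C * (psi.1 k * conjc (phi.1 k))
  + (S22 q k)%:C * (psi.2 k * conjc (phi.2 k)).

Definition ip (q : R) (psi phi : elt) : R[i] :=
  Complex (\int[leb]_(k in setT) complex.Re (ipw q psi phi k))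
          (\int[leb]_(k in setT) complex.Im (ipw q psi phi k)).

Definition normK (q : R) (f : elt) : R :=
  Num.sqrt (\int[leb]_(k in setT) Sform q f k).

(* characteristic function of (-oo, s], with s = None meaning s = +oo *)
Definition chi (s : option R) (k : R) : R[i] :=
  match s with Some s => if k <= s then 1 else 0 | None => 1 end.

Definition P1 (s : option R) (f : elt) : elt := (fun k => chi s k * f.1 k, fun _ => 0).
Definition P2 (s : option R) (f : elt) : elt := (fun _ => 0, fun k => chi s k * f.2 k).
Definition Iop (f : elt) : elt := eadd (P1 None f) (P2 None f).

(* E(0) := lim_{t -> 0+} E(t) = P^2(oo); that this is indeed the strong limit
   is part of the continuity claim of the theorem. *)
Definition E (q : R) (t : R) (f : elt) : elt :=
  if t < 0 then esub (P2 (Some (- ln (- 2 * t) / q)) f) (P2 (Some (ln (- 2 * t) / q)) f)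
  else if t == 0 then P2 None f
  else eadd (esub (P1 (Some (ln (2 * t) / q)) f) (P1 (Some (- ln (2 * t) / q)) f)) (Iop f).

Definition orth_proj (q : R) (P : elt -> elt) : Prop :=
  [/\ (forall f, inK q f -> inK q (P f)),
      (forall f g, inK q f -> inK q g -> eqK f g -> eqK (P f) (P g)),
      (forall a f g, inK q f -> inK q g ->
          eqK (P (eadd (escale a f) g)) (eadd (escale a (P f)) (P g))),
      (forall f, inK q f -> eqK (P (P f)) (P f)) &
      (forall f g, inK q f -> inK q g -> ip q (P f) g = ip q f (P g))].

Definition in_range (t : R) : Prop := - (1/2) <= t <= 1/2.

End TouchingDisks.

From HB Require Import structures.
From mathcomp Require Import all_boot all_order all_algebra.
From mathcomp Require Import all_classical all_reals all_analysis.
From mathcomp Require Import complex.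
From mathcomp Require Import lra.
From mathcomp Require Import measurable_realfun.
Set Implicit Arguments. Unset Strict Implicit. Unset Printing Implicit Defensive.
Import Order.TTheory GRing.Theory Num.Theory.
Import numFieldNormedType.Exports.
Local Open Scope ring_scope.
Local Open Scope classical_set_scope.

(* In Fourier variables, E(t) multiplies the first component of a density by the
   indicator of {k | lam k <= t} and the second by that of {k | - lam k <= t},
   where lam k = e^{-|k| q1} / 2 ranges in (0, 1/2]: {E(t)} is the spectral
   resolution of the multiplication operator diag(lam, - lam), which is
   self-adjoint for the diagonal weight S.  The projection, composition and
   boundary properties are pointwise identities between indicators.  For strong
   continuity, |(E(t) - E(s)) f|^2 is at most the S-weighted mass of f on
   {|lam k - s| <= |t - s|} (resp. with - lam), which tends to 0 by dominated
   convergence because the level sets of lam have at most two points. *)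

Section RealMeasurability.
Variable R : realType.
Notation leb := (@lebesgue_measure R).

Lemma measurable_natr_bool (b : R -> bool) : measurable_fun setT b ->
  measurable_fun setT (fun k => (b k)%:R : R).
Proof.
move=> mb; have -> : (fun k => (b k)%:R : R) = fun k => if b k then 1 else 0.
  by apply/funext => k; case: (b k).
by apply: measurable_fun_ifT => //; exact: measurable_cst.
Qed.

Lemma measurable_invr : measurable_fun setT (@GRing.inv R).
Proof.
have -> : @GRing.inv R = fun x => if x == 0 then 0 else x^-1.
  by apply/funext => x; case: eqP => // ->; rewrite invr0.
apply: measurable_fun_if => //.
  by apply: measurable_fun_eqr => //; exact: measurable_cst.
have -> : setT `&` ((fun x : R => x == 0) @^-1` [set false]) = [set x | x != 0].
  by apply/seteqP; split => x /=; [case=> _ /negbT|move=> /negbTE ->].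
apply: open_continuous_measurable_fun; first exact: open_neq.
by move=> x; rewrite inE /= => x0; exact: inv_continuous.
Qed.

Lemma negligible_level_norm (x : R -> R) s :
  (forall k1 k2, x k1 = x k2 -> `|k1| = `|k2|) ->
  leb.-negligible [set k | x k = s].
Proof.
move=> x_norm; have [[k0 xk0]|nolevel] := pselect (exists k0, x k0 = s); last first.
  by apply: negligibleS (negligible_set0 _) => k /= xk; apply: nolevel; exists k.
have N : leb.-negligible ([set k0] `|` [set - k0]).
  by apply: negligibleU; apply/negligibleP => //; exact: lebesgue_measure_set1.
apply: negligibleS N => k /= xk; have /eqP := x_norm _ _ (etrans xk (esym xk0)).
by rewrite eqr_norm2 => /orP[] /eqP ->; [left|right].
Qed.

Lemma measurable_natr_neq (b c : R -> bool) :
  measurable_fun setT b -> measurable_fun setT c ->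
  measurable_fun setT (fun k => (b k != c k)%:R : R).
Proof.
move=> mb mc; have -> : (fun k => (b k != c k)%:R : R) =
    fun k => `|(b k)%:R - (c k)%:R|.
  by apply/funext => k; case: (b k); case: (c k); rewrite /= ?subrr ?normr0
    ?subr0 ?sub0r ?normrN ?normr1.
apply: measurableT_comp => //.
by apply: measurable_funB; exact: measurable_natr_bool.
Qed.

Lemma measurable_near_level (x w : R -> R) s d :
  measurable_fun setT x -> measurable_fun setT w ->
  measurable_fun setT (fun k => (`|x k - s| <= d)%R%:R * w k).
Proof.
move=> mx mw; apply: measurable_funM => //.
apply: measurable_natr_bool; apply: measurable_fun_ler; last exact: measurable_cst.
by apply: measurableT_comp => //; apply: measurable_funB => //; exact: measurable_cst.
Qed.

(* Dominated convergence along d = 1/(n+1): off the null level set [x = s]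
   the integrands eventually vanish. *)
Lemma integral_near_level_lt (w x : R -> R) s :
  measurable_fun setT w -> (forall k, 0 <= w k) ->
  (\int[leb]_(k in setT) (w k)%:E < +oo)%E ->
  measurable_fun setT x -> leb.-negligible [set k | x k = s] ->
  forall e : R, 0 < e -> exists2 d : R, 0 < d &
    (\int[leb]_(k in setT) ((`|x k - s| <= d)%R%:R * w k)%:E < e%:E)%E.
Proof.
move=> mw w0 wfin mx nx e e0.
pose f_ n k := (((`|x k - s| <= n.+1%:R^-1)%R%:R * w k)%:E : \bar R).
have mf_ n : measurable_fun setT (f_ n).
  by apply/measurable_EFinP; exact: measurable_near_level.
have f_0 : \forall k \ae leb, setT k -> f_ ^~ k @ \oo --> (cst 0 k : \bar R).
  apply: negligibleS nx => k /= nf_0; apply: contrapT => xks; apply: nf_0 => _.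
  apply: cvg_near_cst.
  have xks_gt0 : 0 < `|x k - s| by rewrite normr_gt0 subr_eq0; apply/eqP.
  apply: filterS (near_infty_natSinv_lt (PosNum xks_gt0)) => n /= ltn.
  by rewrite /f_ leNgt ltn mul0r.
have iw : leb.-integrable setT (EFin \o w).
  apply/integrableP; split; first exact/measurable_EFinP.
  by under eq_integral => k _ do rewrite /comp abse_EFin ger0_norm //.
have f_w : \forall k \ae leb, forall n, setT k -> (`|f_ n k| <= (EFin \o w) k)%E.
  apply: aeW => k n _; rewrite /f_ /= lee_fin.
  by case: (`|x k - s| <= _)%R; rewrite ?mul1r ?mul0r ?normr0 ?ger0_norm.
have [_ _] := @dominated_convergence _ _ _ leb setT measurableT f_ (cst 0)
  (EFin \o w) mf_ (measurable_cst _) f_0 iw f_w.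
rewrite integral0 => /fine_cvgP [f_fin f_cvg].
have [N _ /(_ N (leqnn N)) [fin_N lt_N]] :=
  filterS2 _ (fun n a b => conj a b) f_fin (cvgr_lt 0 f_cvg e e0).
exists N.+1%:R^-1; first by rewrite invr_gt0 ltr0n.
by move: fin_N lt_N; rewrite /= /f_ => fin_N; rewrite -(fineK fin_N) lte_fin.
Qed.

End RealMeasurability.

Section IndicatorMultipliers.
Variables (R : realType) (q : R).
Hypothesis q_ge0 : 0 <= q.
Notation leb := (@lebesgue_measure R).

Definition mul_indic (b1 b2 : R -> bool) (f : elt R) : elt R :=
  (fun k => (b1 k)%:R * f.1 k, fun k => (b2 k)%:R * f.2 k).

Definition Sform1 (f : elt R) k := S11 q k * sqmod (f.1 k).
Definition Sform2 (f : elt R) k := S22 q k * sqmod (f.2 k).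

Lemma SformE f k : Sform q f k = Sform1 f k + Sform2 f k.
Proof. by []. Qed.

Lemma sqmod_ge0 (z : R[i]) : 0 <= sqmod z.
Proof. by rewrite /sqmod addr_ge0 // sqr_ge0. Qed.

Lemma sqmod_mulb (b : bool) (z : R[i]) : sqmod (b%:R * z) = b%:R * sqmod z.
Proof. by case: b; rewrite ?mul1r ?mul0r // /sqmod /= expr0n addr0. Qed.

Lemma sqmod_mulbB (b c : bool) (z : R[i]) :
  sqmod (b%:R * z - c%:R * z) = (b != c)%:R * sqmod z.
Proof.
have sqmodN : sqmod (- z) = sqmod z by case: z => x y; rewrite /sqmod /= !sqrrN.
have sqmod0 : sqmod (0 : R[i]) = 0 by rewrite /sqmod /= expr0n addr0.
by case: b; case: c; rewrite /= ?mul1r ?mul0r ?subrr ?subr0 ?sub0r ?sqmodN.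
Qed.

Lemma ler_mulb (b : bool) (x : R) : 0 <= x -> b%:R * x <= x.
Proof. by case: b; rewrite ?mul1r ?mul0r. Qed.

Lemma ler_mulb2 (b c : bool) (x : R) : 0 <= x -> b ==> c -> b%:R * x <= c%:R * x.
Proof. by move=> x0; case: b; case: c; rewrite ?mul0r ?mul1r. Qed.

Lemma S11_ge0 k : 0 <= S11 q k.
Proof.
by rewrite /S11 divr_ge0 ?mulr_ge0 // subr_ge0 expR_le1 oppr_le0 mulr_ge0.
Qed.

Lemma S22_ge0 k : 0 <= S22 q k.
Proof. by rewrite /S22 divr_ge0 ?mulr_ge0 // addr_ge0 // ltW // expR_gt0. Qed.

Lemma Sform1_ge0 f k : 0 <= Sform1 f k.
Proof. by rewrite mulr_ge0 ?S11_ge0 ?sqmod_ge0. Qed.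

Lemma Sform2_ge0 f k : 0 <= Sform2 f k.
Proof. by rewrite mulr_ge0 ?S22_ge0 ?sqmod_ge0. Qed.

Lemma Sform_ge0 f k : 0 <= Sform q f k.
Proof. by rewrite addr_ge0 ?Sform1_ge0 ?Sform2_ge0. Qed.

Lemma measurable_S11 : measurable_fun setT (S11 q).
Proof.
apply: measurable_funM.
  apply: measurable_funB; first exact: measurable_cst.
  apply: measurableT_comp; first exact: measurable_expR.
  by apply: measurable_funN; apply: measurable_funM => //; exact: measurable_cst.
apply: measurableT_comp; first exact: measurable_invr.
by apply: measurable_funM => //; exact: measurable_cst.
Qed.

Lemma measurable_S22 : measurable_fun setT (S22 q).
Proof.
apply: measurable_funM.
  apply: measurable_funD; first exact: measurable_cst.
  apply: measurableT_comp; first exact: measurable_expR.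
  by apply: measurable_funN; apply: measurable_funM => //; exact: measurable_cst.
apply: measurableT_comp; first exact: measurable_invr.
by apply: measurable_funM => //; exact: measurable_cst.
Qed.

Lemma measurable_sqmod (g : R -> R[i]) :
  measurable_fun setT (fun k => complex.Re (g k)) ->
  measurable_fun setT (fun k => complex.Im (g k)) ->
  measurable_fun setT (fun k => sqmod (g k)).
Proof. by move=> mRe mIm; apply: measurable_funD; apply: measurable_funX. Qed.

Lemma inK_measurable_Sform1 f : inK q f -> measurable_fun setT (Sform1 f).
Proof.
by case=> m1 m2 _ _ _; apply: measurable_funM; [exact: measurable_S11|exact: measurable_sqmod].
Qed.

Lemma inK_measurable_Sform2 f : inK q f -> measurable_fun setT (Sform2 f).
Proof.
by case=> _ _ m1 m2 _; apply: measurable_funM; [exact: measurable_S22|exact: measurable_sqmod].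
Qed.

Lemma inK_measurable_Sform f : inK q f -> measurable_fun setT (Sform q f).
Proof.
by move=> fK; apply: measurable_funD;
  [exact: inK_measurable_Sform1|exact: inK_measurable_Sform2].
Qed.

Lemma inK_dominated_fin f (g : R -> R) : inK q f -> measurable_fun setT g ->
  (forall k, 0 <= g k <= Sform q f k) ->
  (\int[leb]_(k in setT) (g k)%:E < +oo)%E.
Proof.
move=> fK mg g_bnd; have [_ _ _ _ fin] := fK; apply: le_lt_trans fin.
apply: ge0_le_integral => //.
- by move=> k _; rewrite lee_fin; case/andP: (g_bnd k).
- exact/measurable_EFinP.
- by apply/measurable_EFinP; exact: inK_measurable_Sform.
by move=> k _; rewrite lee_fin; case/andP: (g_bnd k).
Qed.

Lemma inK_Sform1_fin f : inK q f -> (\int[leb]_(k in setT) (Sform1 f k)%:E < +oo)%E.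
Proof.
move=> fK; apply: (inK_dominated_fin fK (inK_measurable_Sform1 fK)) => k.
by rewrite Sform1_ge0 SformE lerDl Sform2_ge0.
Qed.

Lemma inK_Sform2_fin f : inK q f -> (\int[leb]_(k in setT) (Sform2 f k)%:E < +oo)%E.
Proof.
move=> fK; apply: (inK_dominated_fin fK (inK_measurable_Sform2 fK)) => k.
by rewrite Sform2_ge0 SformE lerDr Sform1_ge0.
Qed.

Lemma Sform_mul_indic b1 b2 f k :
  Sform q (mul_indic b1 b2 f) k = (b1 k)%:R * Sform1 f k + (b2 k)%:R * Sform2 f k.
Proof. by rewrite /Sform /= !sqmod_mulb (mulrCA (S11 q k)) (mulrCA (S22 q k)). Qed.

Lemma Sform_mul_indicB b1 b2 c1 c2 f k :
  Sform q (esub (mul_indic b1 b2 f) (mul_indic c1 c2 f)) k =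
  (b1 k != c1 k)%:R * Sform1 f k + (b2 k != c2 k)%:R * Sform2 f k.
Proof. by rewrite /Sform /= !sqmod_mulbB (mulrCA (S11 q k)) (mulrCA (S22 q k)). Qed.

Lemma inK_mul_indic b1 b2 f : measurable_fun setT b1 -> measurable_fun setT b2 ->
  inK q f -> inK q (mul_indic b1 b2 f).
Proof.
move=> mb1 mb2 fK; have [m1 m2 m3 m4 _] := fK.
have mulb_meas (b : R -> bool) (g : R -> R) : measurable_fun setT b ->
    measurable_fun setT g -> measurable_fun setT (fun k => (b k)%:R * g k).
  by move=> mb mg; apply: measurable_funM => //; exact: measurable_natr_bool.
have ReIm_mulb (b : bool) (z : R[i]) :
    complex.Re (b%:R * z) = b%:R * complex.Re z /\
    complex.Im (b%:R * z) = b%:R * complex.Im z.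
  by case: b; rewrite ?mul1r ?mul0r.
split.
- by under eq_fun do rewrite /= (ReIm_mulb _ _).1; exact: mulb_meas.
- by under eq_fun do rewrite /= (ReIm_mulb _ _).2; exact: mulb_meas.
- by under eq_fun do rewrite /= (ReIm_mulb _ _).1; exact: mulb_meas.
- by under eq_fun do rewrite /= (ReIm_mulb _ _).2; exact: mulb_meas.
apply: (inK_dominated_fin fK).
  rewrite (funext (Sform_mul_indic _ _ _)).
  by apply: measurable_funD; apply: mulb_meas => //;
    [exact: inK_measurable_Sform1|exact: inK_measurable_Sform2].
move=> k; rewrite Sform_ge0 Sform_mul_indic SformE.
by rewrite lerD ?ler_mulb ?Sform1_ge0 ?Sform2_ge0.
Qed.

Lemma eqK_refl (f : elt R) : eqK f f.
Proof. exact: aeW. Qed.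

Lemma mul_indic_eqK b1 b2 f g : eqK f g -> eqK (mul_indic b1 b2 f) (mul_indic b1 b2 g).
Proof. by apply: negligibleS => k /= nQ [fg1 fg2]; apply: nQ; rewrite fg1 fg2. Qed.

Lemma mul_indic_linear b1 b2 a f g :
  mul_indic b1 b2 (eadd (escale a f) g) =
  eadd (escale a (mul_indic b1 b2 f)) (mul_indic b1 b2 g).
Proof. by congr pair; apply/funext => k /=; rewrite mulrDr mulrCA. Qed.

Lemma mul_indicA b1 b2 c1 c2 f :
  mul_indic b1 b2 (mul_indic c1 c2 f) =
  mul_indic (fun k => b1 k && c1 k) (fun k => b2 k && c2 k) f.
Proof. by congr pair; apply/funext => k /=; rewrite mulrA -natrM mulnb. Qed.

Lemma mul_indic_id b1 b2 f : mul_indic b1 b2 (mul_indic b1 b2 f) = mul_indic b1 b2 f.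
Proof. by rewrite mul_indicA; congr mul_indic; apply/funext => k; exact: andbb. Qed.

Lemma mul_indicT f : mul_indic (fun=> true) (fun=> true) f = f.
Proof. by case: f => f1 f2; congr pair; apply/funext => k /=; rewrite mul1r. Qed.

Lemma IopE (f : elt R) : Iop f = f.
Proof. by case: f => f1 f2; congr pair; apply/funext => k /=; rewrite mul1r ?addr0 ?add0r. Qed.

Lemma mul_indicF f : mul_indic (fun=> false) (fun=> false) f = ezero R.
Proof. by congr pair; apply/funext => k /=; rewrite mul0r. Qed.

Lemma ip_mul_indic b1 b2 f g :
  ip q (mul_indic b1 b2 f) g = ip q f (mul_indic b1 b2 g).
Proof.
rewrite /ip; suff -> : ipw q (mul_indic b1 b2 f) g = ipw q f (mul_indic b1 b2 g) by [].
apply/funext => k; rewrite /ipw /=.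
by case: (b1 k); case: (b2 k); rewrite ?mul1r ?mul0r ?conjc0 ?mulr0.
Qed.

Lemma ip0r f : ip q f (ezero R) = 0.
Proof.
rewrite /ip; have -> : ipw q f (ezero R) = fun=> 0.
  by apply/funext => k; rewrite /ipw conjc0 !mulr0 addr0.
by rewrite Rintegral_cst // mul0r.
Qed.

Lemma orth_proj_mul_indic b1 b2 : measurable_fun setT b1 -> measurable_fun setT b2 ->
  orth_proj q (mul_indic b1 b2).
Proof.
move=> mb1 mb2; split.
- by move=> f; exact: inK_mul_indic.
- by move=> f g _ _; exact: mul_indic_eqK.
- by move=> a f g _ _; rewrite mul_indic_linear; exact: eqK_refl.
- by move=> f _; rewrite mul_indic_id; exact: eqK_refl.
- by move=> f g _ _; exact: ip_mul_indic.
Qed.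

Lemma normK_lt h e : 0 < e ->
  (\int[leb]_(k in setT) (Sform q h k)%:E < (e ^+ 2)%:E)%E -> normK q h < e.
Proof.
move=> e0 lt_e2.
have int_fin : (\int[leb]_(k in setT) (Sform q h k)%:E)%E \is a fin_num.
  rewrite ge0_fin_numE ?(lt_trans lt_e2) ?ltry //.
  by apply: integral_ge0 => k _; rewrite lee_fin Sform_ge0.
rewrite /normK -[X in _ < X](gtr0_norm e0) -sqrtr_sqr ltr_sqrt ?exprn_gt0 //.
by rewrite -lte_fin /Rintegral fineK.
Qed.

End IndicatorMultipliers.

Lemma lt_neq_dist (R : realFieldType) (x t s : R) :
  (x < t) != (x < s) -> `|x - s| <= `|t - s|.
Proof.
have := ler_norm (t - s); have := ler_norm (s - t); rewrite distrC => ? ?.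
by case: ltP => ?; case: ltP => ? //= _; rewrite ler_norml; apply/andP; split; lra.
Qed.

Lemma le_neq_dist (R : realFieldType) (x t s : R) :
  (x <= t) != (x <= s) -> `|x - s| <= `|t - s|.
Proof.
have := ler_norm (t - s); have := ler_norm (s - t); rewrite distrC => ? ?.
by case: leP => ?; case: leP => ? //= _; rewrite ler_norml; apply/andP; split; lra.
Qed.

Section SpectralResolution.
Variables (R : realType) (q : R).
Hypothesis q_gt0 : 0 < q.
Let q_ge0 : 0 <= q := ltW q_gt0.
Notation leb := (@lebesgue_measure R).

Definition lam (k : R) : R := expR (- (`|k| * q)) / 2.

(* The inequality is strict for [k > 0] and weak for [k <= 0]; this only matters
   on the null set [lam k = t] and mirrors the closed half-lines in [chi]. *)
Definition E1 (t k : R) : bool := if 0 < k then lam k < t else lam k <= t.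
Definition E2 (t k : R) : bool := if 0 < k then - lam k <= t else - lam k < t.

Lemma lam_gt0 k : 0 < lam k.
Proof. by rewrite divr_gt0 // expR_gt0. Qed.

Lemma lam_le_half k : lam k <= 1/2.
Proof.
have : expR (- (`|k| * q)) <= 1 by rewrite expR_le1 oppr_le0 mulr_ge0.
rewrite /lam; lra.
Qed.

Lemma lam_lt_half k : k != 0 -> lam k < 1/2.
Proof.
move=> k0; have : expR (- (`|k| * q)) < 1.
  by rewrite expR_lt1 oppr_lt0 mulr_gt0 // normr_gt0.
rewrite /lam; lra.
Qed.

Lemma lam_norm_inj k1 k2 : lam k1 = lam k2 -> `|k1| = `|k2|.
Proof.
move=> /(congr1 (fun x => x * 2)); rewrite /lam !divfK //.
by move=> /expR_inj/oppr_inj/(mulIf (lt0r_neq0 q_gt0)).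
Qed.

Lemma measurable_lam : measurable_fun setT lam.
Proof.
apply: measurable_funM; last exact: measurable_cst.
apply: measurableT_comp; first exact: measurable_expR.
by apply: measurable_funN; apply: measurable_funM => //; exact: measurable_cst.
Qed.

Lemma measurable_E1 t : measurable_fun setT (E1 t).
Proof.
apply: measurable_fun_ifT.
- by apply: measurable_fun_ltr => //; exact: measurable_cst.
- by apply: measurable_fun_ltr; [exact: measurable_lam|exact: measurable_cst].
- by apply: measurable_fun_ler; [exact: measurable_lam|exact: measurable_cst].
Qed.

Lemma measurable_E2 t : measurable_fun setT (E2 t).
Proof.
have mNlam := measurable_funN measurable_lam.
apply: measurable_fun_ifT.
- by apply: measurable_fun_ltr => //; exact: measurable_cst.
- by apply: measurable_fun_ler => //; exact: measurable_cst.
- by apply: measurable_fun_ltr => //; exact: measurable_cst.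
Qed.

Lemma E1_E2 t k : E1 t k = ~~ E2 (- t) k.
Proof. by rewrite /E1 /E2; case: ifP => _; rewrite ?lerN2 ?ltrN2 -?ltNge -?leNgt. Qed.

Lemma E1_nonpos t k : t <= 0 -> E1 t k = false.
Proof.
move=> t0; have := lam_gt0 k; rewrite /E1.
by case: ifP => _ ?; apply/negbTE; rewrite -?leNgt -?ltNge; lra.
Qed.

Lemma E2_nonneg t k : 0 <= t -> E2 t k = true.
Proof. by move=> t0; have := lam_gt0 k; rewrite /E2; case: ifP => _ ?; lra. Qed.

Lemma E1_min t s k : E1 (Order.min t s) k = E1 t k && E1 s k.
Proof. by rewrite /E1; case: ifP => _; [exact: lt_min|exact: le_min]. Qed.

Lemma E2_min t s k : E2 (Order.min t s) k = E2 t k && E2 s k.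
Proof. by rewrite /E2; case: ifP => _; [exact: le_min|exact: lt_min]. Qed.

Lemma E1_top k : E1 (1/2) k.
Proof.
rewrite /E1; case: ifP => [k0|_]; last exact: lam_le_half.
exact/lam_lt_half/lt0r_neq0.
Qed.

Lemma E2_bot k : E2 (- (1/2)) k = false.
Proof. by rewrite -[E2 _ k]negbK -E1_E2 E1_top. Qed.

Lemma E1_neq_dist t s k : E1 t k != E1 s k -> `|lam k - s| <= `|t - s|.
Proof. by rewrite /E1; case: ifP => _; [exact: lt_neq_dist|exact: le_neq_dist]. Qed.

Lemma E2_neq_dist t s k : E2 t k != E2 s k -> `|- lam k - s| <= `|t - s|.
Proof. by rewrite /E2; case: ifP => _; [exact: le_neq_dist|exact: lt_neq_dist]. Qed.

Lemma chi_sub_E2 t k : 0 < t <= 1/2 ->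
  chi (Some (- ln (2 * t) / q)) k - chi (Some (ln (2 * t) / q)) k = (E2 (- t) k)%:R.
Proof.
case/andP => t0 t1; have t2_gt0 : 0 < 2 * t by lra.
have le_Nln a : (a <= - ln (2 * t) / q) = (2 * t <= expR (- (a * q))).
  by rewrite ler_pdivlMr // lerNr -[LHS]ler_expR lnK ?posrE.
have le_ln a : (a <= ln (2 * t) / q) = (expR (a * q) <= 2 * t).
  by rewrite ler_pdivlMr // -[LHS]ler_expR lnK ?posrE.
rewrite /chi le_Nln le_ln /E2 /lam; have [k0|k0] := ltP 0 k.
  have : 1 < expR (k * q) by rewrite expR_gt1 mulr_gt0.
  move=> ekq; have -> : (expR (k * q) <= 2 * t) = false.
    by apply/negbTE; rewrite -ltNge; lra.
  rewrite gtr0_norm //; have -> : (- (expR (- (k * q)) / 2) <= - t) =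
    (2 * t <= expR (- (k * q))) by apply/idP/idP; lra.
  by case: (_ <= _); rewrite subr0.
rewrite ler0_norm // mulNr opprK.
have : 1 <= expR (- (k * q)) by rewrite -expR0 ler_expR oppr_ge0 mulr_le0_ge0.
move=> ekq; have -> : (2 * t <= expR (- (k * q))) = true by apply/idP; lra.
have -> : (- (expR (k * q) / 2) < - t) = ~~ (expR (k * q) <= 2 * t).
  by rewrite -ltNge; apply/idP/idP; lra.
by case: (_ <= _); rewrite ?subrr ?subr0.
Qed.

Lemma E_mul_indic t : in_range t -> E q t = mul_indic (E1 t) (E2 t).
Proof.
case/andP => tl tu; apply/funext => f; rewrite /E.
have [t0|t0] := ltP t 0.
  have ht : 0 < - t <= 1/2 by apply/andP; split; lra.
  congr pair; apply/funext => k /=.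
    by rewrite E1_nonpos ?ltW // mul0r oppr0 addr0.
  by rewrite -mulrBl (mulNr 2 t) -(mulrN 2 t) chi_sub_E2 // opprK.
have [->|tn0] := eqVneq t 0.
  by congr pair; apply/funext => k /=; rewrite ?E1_nonpos ?E2_nonneg ?mul0r.
have ht : 0 < t <= 1/2 by rewrite lt_neqAle eq_sym tn0 t0 tu.
congr pair; apply/funext => k /=.
  rewrite addr0 -mulrBl -mulrDl -opprB chi_sub_E2 // E1_E2.
  by case: (E2 _ k); rewrite /= ?addNr ?oppr0 ?add0r.
by rewrite E2_nonneg // oppr0 !add0r.
Qed.

Lemma E_bot f : E q (- (1/2)) f = ezero R.
Proof.
rewrite E_mul_indic; last by apply/andP; split; lra.
rewrite -(mul_indicF f); congr mul_indic; apply/funext => k.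
  by rewrite E1_nonpos //; lra.
exact: E2_bot.
Qed.

Lemma E_top f : E q (1/2) f = f.
Proof.
rewrite E_mul_indic; last by apply/andP; split; lra.
rewrite -[RHS](mul_indicT f); congr mul_indic; apply/funext => k.
  exact: E1_top.
by rewrite E2_nonneg //; lra.
Qed.

Lemma E_orth_proj t : in_range t -> orth_proj q (E q t).
Proof.
move=> ht; rewrite E_mul_indic //.
exact: orth_proj_mul_indic (measurable_E1 t) (measurable_E2 t).
Qed.

Lemma E_comp t s f : in_range t -> in_range s ->
  E q t (E q s f) = E q (Order.min t s) f.
Proof.
move=> ht hs; have hts : in_range (Order.min t s) by rewrite /Order.min; case: ifP.
rewrite !E_mul_indic // mul_indicA; congr mul_indic; apply/funext => k.
  by rewrite E1_min.
by rewrite E2_min.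
Qed.

Lemma Sform_E_sub_le t s f k d1 d2 : in_range t -> in_range s ->
  `|t - s| <= d1 -> `|t - s| <= d2 ->
  Sform q (esub (E q t f) (E q s f)) k <=
  (`|lam k - s| <= d1)%R%:R * Sform1 q f k + (`|- lam k - s| <= d2)%R%:R * Sform2 q f k.
Proof.
move=> ht hs td1 td2; rewrite !E_mul_indic // Sform_mul_indicB.
rewrite lerD // ler_mulb2 ?Sform1_ge0 ?Sform2_ge0 //; apply/implyP.
  by move=> /E1_neq_dist/le_trans; apply.
by move=> /E2_neq_dist/le_trans; apply.
Qed.

Lemma measurable_Sform_E_sub t s f : in_range t -> in_range s -> inK q f ->
  measurable_fun setT (Sform q (esub (E q t f) (E q s f))).
Proof.
move=> ht hs fK; rewrite !E_mul_indic //.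
rewrite (funext (Sform_mul_indicB q (E1 t) (E2 t) (E1 s) (E2 s) f)).
apply: measurable_funD; apply: measurable_funM.
- by apply: measurable_natr_neq; exact: measurable_E1.
- exact: inK_measurable_Sform1.
- by apply: measurable_natr_neq; exact: measurable_E2.
- exact: inK_measurable_Sform2.
Qed.

Lemma integral_Sform_E_sub_le t s f d1 d2 : in_range t -> in_range s -> inK q f ->
  `|t - s| <= d1 -> `|t - s| <= d2 ->
  (\int[leb]_(k in setT) (Sform q (esub (E q t f) (E q s f)) k)%:E <=
   \int[leb]_(k in setT) ((`|lam k - s| <= d1)%R%:R * Sform1 q f k)%:E +
   \int[leb]_(k in setT) ((`|- lam k - s| <= d2)%R%:R * Sform2 q f k)%:E)%E.
Proof.
move=> ht hs fK td1 td2.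
have mg1 := measurable_near_level s d1 measurable_lam (inK_measurable_Sform1 fK).
have mg2 := measurable_near_level s d2 (measurable_funN measurable_lam)
  (inK_measurable_Sform2 fK).
have g_ge0 (b : bool) w : 0 <= w -> (0 <= (b%:R * w)%:E)%E.
  by move=> ?; rewrite lee_fin mulr_ge0.
rewrite -ge0_integralD //; last 4 first.
- by move=> k _; exact/g_ge0/Sform1_ge0.
- exact/measurable_EFinP.
- by move=> k _; exact/g_ge0/Sform2_ge0.
- exact/measurable_EFinP.
apply: ge0_le_integral => //.
- by move=> k _; rewrite lee_fin Sform_ge0.
- by apply/measurable_EFinP; exact: measurable_Sform_E_sub.
- by apply: emeasurable_funD; exact/measurable_EFinP.
by move=> k _; rewrite -EFinD lee_fin Sform_E_sub_le.
Qed.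

Lemma E_strong_cont s f e : in_range s -> inK q f -> 0 < e ->
  exists2 d, 0 < d & forall t, in_range t -> `|t - s| < d ->
    normK q (esub (E q t f) (E q s f)) < e.
Proof.
move=> hs fK e0; have e2_gt0 : 0 < e ^+ 2 / 2 by rewrite divr_gt0 // exprn_gt0.
have [d1 d1_gt0 small1] := integral_near_level_lt (inK_measurable_Sform1 fK)
  (Sform1_ge0 q_ge0 f) (inK_Sform1_fin q_ge0 fK) measurable_lam
  (negligible_level_norm s lam_norm_inj) e2_gt0.
have [d2 d2_gt0 small2] := integral_near_level_lt (inK_measurable_Sform2 fK)
  (Sform2_ge0 q f) (inK_Sform2_fin q_ge0 fK) (measurable_funN measurable_lam)
  (negligible_level_norm s (fun k1 k2 h => lam_norm_inj (oppr_inj h))) e2_gt0.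
exists (Order.min d1 d2) => [|t ht]; first by rewrite lt_min d1_gt0 d2_gt0.
rewrite lt_min => /andP[/ltW td1 /ltW td2]; apply: normK_lt => //.
apply: le_lt_trans (integral_Sform_E_sub_le ht hs fK td1 td2) _.
by rewrite [X in (_ < X%:E)%E](splitr (e ^+ 2)) EFinD lteD.
Qed.

End SpectralResolution.

Theorem proposition4p3 (R : realType) (Rad r : R) (hR : 0 < Rad) (hr : 0 < r) :
  let q := q1 Rad r in
  (* each E(t) is an orthogonal projection *)
      (forall t, in_range t -> orth_proj q (E q t)) /\
      (* E(t) E(s) = E(min(t,s)) *)
      (forall t s, in_range t -> in_range s -> forall f, inK q f ->
          eqK (E q t (E q s f)) (E q (Order.min t s) f)) /\
      (* E(-1/2) = 0 and E(1/2) = I *)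
      (forall f, inK q f -> eqK (E q (- (1/2)) f) (@ezero R)) /\
      (forall f, inK q f -> eqK (E q (1/2) f) (Iop f)) /\
      (* <f,g> = int_{-1/2}^{1/2} d<f, E(t) g>  (= <f,E(1/2)g> - <f,E(-1/2)g>) *)
      (forall f g, inK q f -> inK q g ->
          ip q f g = ip q f (E q (1/2) g) - ip q f (E q (- (1/2)) g)) /\
      (* right-continuity (strong) *)
      (forall s, in_range s -> forall f, inK q f -> forall e, 0 < e ->
          exists2 d, 0 < d & forall t, in_range t -> s <= t -> t - s < d ->
            normK q (esub (E q t f) (E q s f)) < e) /\
      (* lim_{t -> s} E(t) = E(s) strongly, for all s in [-1/2,1/2] *)
      (forall s, in_range s -> forall f, inK q f -> forall e, 0 < e ->
          exists2 d, 0 < d & forall t, in_range t -> `|t - s| < d ->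
            normK q (esub (E q t f) (E q s f)) < e).
Proof.
move=> q; have q_gt0 : 0 < q by rewrite addr_gt0 // divr_gt0 // mulr_gt0.
split; [|split; [|split; [|split; [|split; [|split]]]]].
- by move=> t; exact: E_orth_proj.
- by move=> t s ht hs f _; rewrite E_comp //; exact: eqK_refl.
- by move=> f _; rewrite E_bot //; exact: eqK_refl.
- by move=> f _; rewrite E_top // IopE; exact: eqK_refl.
- by move=> f g _ _; rewrite E_top // E_bot // ip0r subr0.
- move=> s hs f fK e e0; have [d d_gt0 near_s] := E_strong_cont q_gt0 hs fK e0.
  by exists d => // t ht st tsd; apply: near_s; rewrite // ger0_norm // subr_ge0.
- by move=> s hs f fK e e0; exact: E_strong_cont.
Qed.
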